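(* Let $X$ be a compact topological space, $B\subseteq\mathbb{R}^X$ an $\mathbb{R}$-subalgebra consisting of continuous functions on $X$, and $Q\subseteq B$ a quadratic module with $K_{Q,X}=X$ and $\overline{m(X)}=K_{Q,Y_B}$. Let $q\in B$ satisfy $\{x\in X\mid q(x)=0\}\subseteq\overline{\{x\in X\mid q(x)<0\}}$ (closure in $X$). Let $f=\chi_{\{q\ge0\}}$, $A=B[f]\subseteq\mathbb{R}^X$, and let $Q'$ be the quadratic module of $A$ generated by $Q$ and $qf$, $q(f-1)$. Then $K_{Q',X}=X$ and $\overline{m(X)}=K_{Q',Y_A}$.
   Context: A quadratic module of a commutative unital $\mathbb{R}$-algebra $C$ is a subset $Q\subseteq C$ with $Q+Q\subseteq Q$, $c^2Q\subseteq Q$ for all $c\in C$, and $1\in Q$. For an $\mathbb{R}$-subalgebra $C\subseteq\mathbb{R}^X$ and a quadratic module $Q$ of $C$: $K_{Q,X}:=\{x\in X\mid g(x)\ge0\ \forall g\in Q\}$; $Y_C$ is the set of unital $\mathbb{R}$-algebra homomorphisms $C\to\mathbb{R}$, with the weakest topology making all maps $y\mapsto y(c)$ continuous; $K_{Q,Y_C}:=\{y\in Y_C\mid y(g)\ge0\ \forall g\in Q\}$; $m\colon X\to Y_C$, $m(x)(c)=c(x)$; $\overline{m(X)}$ is the closure in $Y_C$. $\chi_S$ is the characteristic function of $S$, and $\{q\ge0\}=\{x\in X\mid q(x)\ge0\}$. *)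

From HB Require Import structures.
From mathcomp Require Import all_boot all_order all_algebra.
From mathcomp Require Import all_classical all_reals all_analysis.
Unset Printing Implicit Defensive.
Import Order.TTheory GRing.Theory Num.Theory.
Import numFieldNormedType.Exports.
Local Open Scope classical_set_scope.
Local Open Scope ring_scope.

Section Defs.
Variables (R : realType) (X : Type).

Definition is_subalgebra (C : set (X -> R)) : Prop :=
  [/\ C (fun _ => 1),
      (forall c d, C c -> C d -> C (c \+ d)),
      (forall c d, C c -> C d -> C (c \* d)) &
      (forall (r : R) c, C c -> C (fun x => r * c x))].

Definition gen_subalgebra (S : set (X -> R)) : set (X -> R) :=
  [set g | forall D, is_subalgebra D -> S `<=` D -> D g].

Definition is_qmodule (C Q : set (X -> R)) : Prop :=
  [/\ Q `<=` C,
      (forall g h, Q g -> Q h -> Q (g \+ h)),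
      (forall c g, C c -> Q g -> Q (fun x => c x ^+ 2 * g x)) &
      Q (fun _ => 1)].

Definition gen_qmodule (C S : set (X -> R)) : set (X -> R) :=
  [set g | forall Q, is_qmodule C Q -> S `<=` Q -> Q g].

Definition KX (Q : set (X -> R)) : set X :=
  [set x | forall g, Q g -> 0 <= g x].

(* the carrier of Y_C: functions on the elements of C, with the
   product (= pointwise = weak) topology *)

Definition Y (C : set (X -> R)) : set {ptws {c : X -> R | C c} -> R} :=
  [set y | (forall h1 : C (fun _ => 1), y (exist _ _ h1) = 1) /\
    (forall c d (hc : C c) (hd : C d) (hcd : C (c \+ d)),
        y (exist _ _ hcd) = y (exist _ _ hc) + y (exist _ _ hd)) /\
    (forall c d (hc : C c) (hd : C d) (hcd : C (c \* d)),
        y (exist _ _ hcd) = y (exist _ _ hc) * y (exist _ _ hd)) /\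
    (forall (r : R) c (hc : C c) (hrc : C (fun x => r * c x)),
        y (exist _ _ hrc) = r * y (exist _ _ hc))].


Definition KY (C Q : set (X -> R)) : set {ptws {c : X -> R | C c} -> R} :=
  [set y | Y C y /\ forall g (hg : C g), Q g -> 0 <= y (exist _ _ hg)].


Definition m (C : set (X -> R)) (x : X) : {ptws {c : X -> R | C c} -> R} :=
  fun c => proj1_sig c x.

End Defs.
Arguments is_subalgebra {R X} C.
Arguments gen_subalgebra {R X} S _.
Arguments is_qmodule {R X} C Q.
Arguments gen_qmodule {R X} C S _.
Arguments KX {R X} Q _.
Arguments Y {R X} C _.
Arguments KY {R X} C Q _.
Arguments m {R X} C x _.

(* closure of m(X) in Y_C (subspace of the product space) *)
Definition closure_mX (R : realType) (X : Type) (C : set (X -> R)) : set {ptws {c : X -> R | C c} -> R} :=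
  closure (range (m C)) `&` Y C.
Arguments closure_mX {R X} C _.

From HB Require Import structures.
From mathcomp Require Import all_boot all_order all_algebra.
From mathcomp Require Import all_classical all_reals all_analysis.
From mathcomp Require Import ring.
Import Order.TTheory GRing.Theory Num.Theory.
Import numFieldNormedType.Exports.
Local Open Scope classical_set_scope.
Local Open Scope ring_scope.

(* Since f is idempotent, A = B + B f, so a character y of A is determined by
   its restriction to B and the value y(f), which lies in {0, 1}.  The
   restriction is a point x of X (the image of the compact X is closed), and
   the generators q f, q (f - 1) force q x >= 0 when y(f) = 1 and q x <= 0 when
   y(f) = 0.  In both cases x is adherent to {f = y(f)} (for y(f) = 0 by the
   hypothesis on the zeros of q), and y is the image of x under the continuous
   map z |-> (b0 + b1 f |-> b0 z + b1 z y(f)), for any choice of decompositions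
   b0 + b1 f, which agrees with m on {f = y(f)}; hence y lies in the closure
   of m(X). *)

Lemma ptws_eval_continuous (R : realType) (I : Type) (i : I) :
  continuous (fun f : {ptws I -> R} => f i).
Proof. exact: (@proj_continuous {classic I} (fun _ => R) i). Qed.

Lemma ptws_hausdorff (R : realType) (I : Type) : hausdorff_space {ptws I -> R}.
Proof. exact: (@hausdorff_product {classic I} (fun _ => R)). Qed.

Lemma continuous_ptws (R : realType) (I : Type) (T : topologicalType)
    (g : T -> {ptws I -> R}) :
  (forall i, continuous (fun t => g t i)) -> continuous g.
Proof.
move=> cg t; apply/cvg_sup => i; move: t.
apply/(@continuousP _ (initial_topology (@^~ i))) => _ [U oU <-].
by apply: open_comp oU => + _; exact: cg.
Qed.

Lemma continuous_closure_image {T U : topologicalType} {g : T -> U} {E : set T} :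
  continuous g -> g @` closure E `<=` closure (g @` E).
Proof.
move=> cg _ [x Ex <-] V /(cg x) /Ex [z [Ez Vz]].
by exists (g z); split => //; exists z.
Qed.

Section generated.
Context {R : realType} {X : Type}.
Implicit Types (C S : set (X -> R)).

Lemma gen_subalgebra_is_subalgebra S : is_subalgebra (gen_subalgebra S).
Proof.
split.
- by move=> D [].
- move=> c d hc hd D hD SD; case: (hD) => _ DD _ _.
  exact: DD (hc D hD SD) (hd D hD SD).
- move=> c d hc hd D hD SD; case: (hD) => _ _ DM _.
  exact: DM (hc D hD SD) (hd D hD SD).
- move=> r c hc D hD SD; case: (hD) => _ _ _ DZ; exact: DZ (hc D hD SD).
Qed.

Lemma sub_gen_subalgebra S : S `<=` gen_subalgebra S.
Proof. by move=> g Sg D _; apply. Qed.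

Lemma sub_gen_subalgebraUl S T : S `<=` gen_subalgebra (S `|` T).
Proof. by move=> g Sg; apply: sub_gen_subalgebra; left. Qed.

Lemma sub_gen_qmodule C S : S `<=` gen_qmodule C S.
Proof. by move=> g Sg Q _; apply. Qed.

Lemma KX_gen_qmodule C S : is_subalgebra C -> S `<=` C ->
  (forall g, S g -> forall x, 0 <= g x) -> KX (gen_qmodule C S) = [set: X].
Proof.
move=> [C1 CD CM _] SC S_ge0; apply/seteqP; split => // x _ g Q'g.
suff [_ g_ge0] : C g /\ forall x, 0 <= g x by exact: g_ge0.
apply: (Q'g (fun h => C h /\ forall x, 0 <= h x)) => [|h Sh]; last first.
  by split; [exact: SC | exact: S_ge0].
split.
- by move=> h [].
- move=> h1 h2 [C1h h1_ge0] [C2h h2_ge0].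
  by split=> [|z]; [exact: CD | exact: addr_ge0].
- move=> c h Cc [Ch h_ge0]; split=> [|z]; last exact/mulr_ge0/h_ge0/sqr_ge0.
  by apply: (CM) => //; exact: CM.
- by split=> // z; exact: ler01.
Qed.

Lemma app_exist_congr {C} (y : {ptws {c : X -> R | C c} -> R}) {g1 g2}
    (h1 : C g1) (h2 : C g2) :
  g1 = g2 -> y (exist _ g1 h1) = y (exist _ g2 h2).
Proof. by move=> e; subst g2; congr y; congr exist; exact: Prop_irrelevance. Qed.

Lemma Y_idempotent {C y e} (he : C e) : Y C y -> (forall x, e x * e x = e x) ->
  y (exist _ e he) = 0 \/ y (exist _ e he) = 1.
Proof.
move=> [_ [_ [yM _]]] e_idem.
have ee : e \* e = e by apply: funext => x; exact: e_idem.
have hee : C (e \* e) by rewrite ee.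
have : y (exist _ e he) * (y (exist _ e he) - 1) = 0.
  by rewrite mulrBr mulr1 -(yM _ _ he he hee) (app_exist_congr y _ he ee) subrr.
by move/eqP; rewrite mulf_eq0 subr_eq0 => /orP[] /eqP; [left | right].
Qed.

Lemma closure_mX_sub_KY C Q : KX Q = [set: X] -> closure_mX C `<=` KY C Q.
Proof.
move=> KXQ y [cly Yy]; split => // g hg Qg.
pose ev (z : {ptws {c : X -> R | C c} -> R}) := z (exist _ g hg).
have cl_ge0 : closed (ev @^-1` [set r | 0 <= r]).
  apply: preimage_closed; last exact: closed_ge.
  by move=> z _; exact: ptws_eval_continuous.
suff : (ev @^-1` [set r | 0 <= r]) y by [].
rewrite ((closure_id _).1 cl_ge0); apply: closureS cly => _ [x _ <-].
by have : [set: X] x by []; rewrite -KXQ; apply.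
Qed.

Definition restrict_char {C D} (CD : C `<=` D) (y : {ptws {c : X -> R | D c} -> R})
  : {ptws {c : X -> R | C c} -> R} :=
  fun c => y (exist _ (sval c) (CD _ (svalP c))).

Lemma KY_restrict_char {C D Q Q'} (CD : C `<=` D) {y} :
  Q `<=` Q' -> KY D Q' y -> KY C Q (restrict_char CD y).
Proof.
move=> QQ' [[y1 [yD [yM yZ]]] y_ge0]; split=> [|g hg Qg]; last exact/y_ge0/QQ'.
split; first by move=> h1; exact: y1.
split; first by move=> *; exact: yD.
split; first by move=> *; exact: yM.
by move=> *; exact: yZ.
Qed.

End generated.

Lemma closed_range_m {R : realType} {X : topologicalType} {C : set (X -> R)} :
  compact [set: X] -> (forall c, C c -> continuous c) -> closed (range (m C)).
Proof.
move=> cX cC; apply: compact_closed; first exact: ptws_hausdorff.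
apply: continuous_compact => //; apply: continuous_subspaceT.
by apply: continuous_ptws => c; exact: cC _ (svalP c).
Qed.

Lemma KY_restrict_point {R : realType} {X : topologicalType} {A B Q Q' : set (X -> R)}
    (BA : B `<=` A) y :
  compact [set: X] -> (forall b, B b -> continuous b) ->
  closure_mX B = KY B Q -> Q `<=` Q' -> KY A Q' y ->
  exists x, forall b (hb : A b), B b -> y (exist _ b hb) = b x.
Proof.
move=> cX cB clB QQ' KYy; have : closure_mX B (restrict_char BA y).
  by rewrite clB; exact: KY_restrict_char KYy.
rewrite /closure_mX -((closure_id _).1 (closed_range_m cX cB)) => -[[x _ mx] _].
exists x => b hb Bb; have := congr1 (fun z => z (exist _ b Bb)) mx.
by rewrite /m /restrict_char /= => ->; exact: app_exist_congr.
Qed.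

Lemma indic_idem {T : Type} {R : realType} (S : set T) z :
  \1_S z * \1_S z = \1_S z :> R.
Proof. by rewrite indicE; case: (z \in S); rewrite ?mulr1 ?mulr0. Qed.

Section sign_indicator.
Context {R : realType} {X : Type} (q : X -> R).
Local Notation f := (\1_[set x | 0 <= q x] : X -> R).

Lemma indic_ge0E z : f z = if 0 <= q z then 1 else 0.
Proof.
rewrite indicE; case: ifPn => qz; first by rewrite mem_set.
by rewrite memNset //= (negbTE qz).
Qed.

Lemma mul_indic_ge0 z : 0 <= q z * f z.
Proof. by rewrite indic_ge0E; case: ifP; rewrite ?mulr1 ?mulr0. Qed.

Lemma mul_indic_sub1_ge0 z : 0 <= q z * (f z - 1).
Proof.
rewrite indic_ge0E; case: ifPn => [_|]; first by rewrite subrr mulr0.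
by rewrite -ltNge sub0r mulrN1 oppr_ge0 => /ltW.
Qed.

End sign_indicator.

Lemma closure_indic_ge0_level {R : realType} {X : topologicalType} (q : X -> R)
    (c : R) x :
  [set z | q z = 0] `<=` closure [set z | q z < 0] ->
  c = 0 \/ c = 1 -> 0 <= q x * c -> 0 <= q x * (c - 1) ->
  closure [set z | \1_[set x | 0 <= q x] z = c] x.
Proof.
move=> hq [->|->] qc qc1; last first.
  by apply: subset_closure; rewrite /= indic_ge0E -[q x]mulr1 qc.
have qx_le0 : q x <= 0 by rewrite sub0r mulrN1 oppr_ge0 in qc1.
have : closure [set z | q z < 0] x.
  by case: (ltgtP (q x) 0) qx_le0 => // [qx _|qx _]; [exact: subset_closure | exact: hq].
by apply: closureS => z qz; rewrite /= indic_ge0E leNgt qz.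
Qed.

Section idempotent_extension.
Context {R : realType} {X : Type} {B : set (X -> R)} {f : X -> R}.
Hypotheses (sB : is_subalgebra B) (f_idem : forall x, f x * f x = f x).
Local Notation A := (gen_subalgebra (B `|` [set f])).

Lemma gen_subalgebra_idem_decomp {a} :
  A a -> exists b0 b1, [/\ B b0, B b1 & a = b0 \+ b1 \* f].
Proof.
case: sB => B1 BD BM BZ.
have B0 : B (fun x => 0 * 1) by exact: (BZ 0).
move=> /(_ (fun a => exists b0 b1, [/\ B b0, B b1 & a = b0 \+ b1 \* f])).
apply=> [|g [Bg | ->]]; last 2 first.
- by exists g, (fun _ => 0 * 1); split => //; apply: funext => x /=; ring.
- by exists (fun _ => 0 * 1), (fun _ => 1); split => //; apply: funext => x /=; ring.
split.
- exists (fun _ => 1), (fun _ => 0 * 1); split => //.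
  by apply: funext => x /=; ring.
- move=> c d [b0 [b1 [? ? ->]]] [c0 [c1 [? ? ->]]].
  exists (b0 \+ c0), (b1 \+ c1); split; [exact: BD | exact: BD |].
  by apply: funext => x /=; ring.
- move=> c d [b0 [b1 [? ? ->]]] [c0 [c1 [? ? ->]]].
  exists (b0 \* c0), ((b0 \* c1) \+ (b1 \* c0) \+ (b1 \* c1)).
  split; [exact: BM | by apply: (BD); [apply: (BD) |]; exact: BM |].
  apply: funext => x /=.
  transitivity (b0 x * c0 x + (b0 x * c1 x + b1 x * c0 x) * f x
                + b1 x * c1 x * (f x * f x)); first ring.
  by rewrite f_idem; ring.
- move=> r c [b0 [b1 [? ? ->]]].
  exists (fun x => r * b0 x), (fun x => r * b1 x); split; [exact: BZ | exact: BZ |].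
  by apply: funext => x /=; ring.
Qed.

Lemma Y_eval_decomp {y x} (hf : A f) {a} (ha : A a) {b0 b1} :
  Y A y -> (forall b (hb : A b), B b -> y (exist _ b hb) = b x) ->
  B b0 -> B b1 -> a = b0 \+ b1 \* f ->
  y (exist _ a ha) = b0 x + b1 x * y (exist _ f hf).
Proof.
move=> [_ [yD [yM _]]] yx Bb0 Bb1 ea.
have [_ AD AM _] := gen_subalgebra_is_subalgebra (B `|` [set f]).
have BA : B `<=` A := sub_gen_subalgebraUl B [set f].
have Ab1f : A (b1 \* f) by apply: AM => //; exact: BA.
rewrite (app_exist_congr y ha (AD _ _ (BA _ Bb0) Ab1f) ea).
rewrite (yD _ _ (BA _ Bb0) Ab1f) (yM _ _ (BA _ Bb1) hf).
by rewrite (yx _ _ Bb0) (yx _ _ Bb1).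
Qed.

Lemma gen_subalgebra_mulf_mulfB1 {b} :
  B b -> A (b \* f) /\ A (b \* (f \- (fun _ => 1))).
Proof.
have [_ AD AM AZ] := gen_subalgebra_is_subalgebra (B `|` [set f]).
move=> /(sub_gen_subalgebraUl _ [set f]) Ab.
have Af : A f by apply: sub_gen_subalgebra; right.
have Abf : A (b \* f) by exact: AM.
split=> //; have -> : b \* (f \- (fun _ => 1)) = b \* f \+ (fun x => -1 * b x).
  by apply: funext => x /=; ring.
by apply: AD => //; exact: AZ.
Qed.

Lemma Y_eval_mulf {y x} (hf : A f) {b} (Bb : B b) (hbf : A (b \* f)) :
  Y A y -> (forall c (hc : A c), B c -> y (exist _ c hc) = c x) ->
  y (exist _ (b \* f) hbf) = b x * y (exist _ f hf).
Proof.
move=> Yy yx; have [_ _ _ BZ] := sB.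
rewrite (Y_eval_decomp hf hbf Yy yx (BZ 0 _ Bb) Bb); first ring.
by apply: funext => z /=; ring.
Qed.

Lemma Y_eval_mulfB1 {y x} (hf : A f) {b} (Bb : B b)
    (hbf : A (b \* (f \- (fun _ => 1)))) :
  Y A y -> (forall c (hc : A c), B c -> y (exist _ c hc) = c x) ->
  y (exist _ _ hbf) = b x * (y (exist _ f hf) - 1).
Proof.
move=> Yy yx; have [_ _ _ BZ] := sB.
rewrite (Y_eval_decomp hf hbf Yy yx (BZ (-1) _ Bb) Bb); first ring.
by apply: funext => z /=; ring.
Qed.

End idempotent_extension.

Lemma Y_in_closure_range_m {R : realType} {X : topologicalType} {B : set (X -> R)}
    {f : X -> R} {y x} (hf : gen_subalgebra (B `|` [set f]) f) :
  is_subalgebra B -> (forall b, B b -> continuous b) ->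
  (forall x, f x * f x = f x) ->
  let A := gen_subalgebra (B `|` [set f]) in
  Y A y -> (forall b (hb : A b), B b -> y (exist _ b hb) = b x) ->
  closure [set z | f z = y (exist _ f hf)] x -> closure (range (m A)) y.
Proof.
move=> sB cB f_idem A Yy yx clx; set c := y (exist _ f hf) in clx.
have dec (a : {g | A g}) : {b : (X -> R) * (X -> R) |
    [/\ B b.1, B b.2 & sval a = b.1 \+ b.2 \* f]}.
  apply: cid; have [b0 [b1 ?]] := gen_subalgebra_idem_decomp sB f_idem (svalP a).
  by exists (b0, b1).
pose psi (z : X) : {ptws {g | A g} -> R} :=
  fun a => (sval (dec a)).1 z + c * (sval (dec a)).2 z.
have cpsi : continuous psi.
  apply: continuous_ptws => a; apply: cB; rewrite /psi.
  case: (dec a) => -[b0 b1] /= [Bb0 Bb1 _]; case: sB => _ BD _ BZ; exact/BD/BZ.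
have psix : psi x = y.
  apply: funext => -[a ha]; rewrite /psi.
  case: (dec _) => -[b0 b1] /= [Bb0 Bb1 ea].
  by rewrite (Y_eval_decomp hf ha Yy yx Bb0 Bb1 ea) mulrC.
have psi_m z : f z = c -> psi z = m A z.
  move=> fz; apply: funext => -[a ha]; rewrite /psi /m /=.
  by case: (dec _) => -[b0 b1] /= [_ _ ->] /=; rewrite fz mulrC.
rewrite -psix; have := continuous_closure_image cpsi _ (imageP psi clx).
by apply: closureS => _ [z fz <-]; exists z => //; rewrite psi_m.
Qed.

Theorem proposition3p5 (R : realType) (X : topologicalType)
  (B Q : set (X -> R)) (q : X -> R) :
  compact [set: X] ->
  is_subalgebra B ->
  (forall b, B b -> continuous b) ->
  is_qmodule B Q ->
  KX Q = [set: X] ->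
  closure_mX B = KY B Q ->
  B q ->
  [set x | q x = 0] `<=` closure [set x | q x < 0] ->
  let f : X -> R := \1_[set x | 0 <= q x] in
  let A := gen_subalgebra (B `|` [set f]) in
  let Q' := gen_qmodule A
      (Q `|` [set (q \* f); (q \* (f \- (fun _ => 1)))]) in
  KX Q' = [set: X] /\ closure_mX A = KY A Q'.
Proof.
move=> cX sB cB [QB _ _ _] KXQ clB Bq hq f A Q'.
have BA : B `<=` A := sub_gen_subalgebraUl B [set f].
have Af : A f by apply: sub_gen_subalgebra; right.
have [Aqf Aqf1] := gen_subalgebra_mulf_mulfB1 (f := f) Bq.
have KQ' : KX Q' = [set: X].
  apply: KX_gen_qmodule => [|g [Qg | [->|->]] //|g [Qg | [->|->]] z /=].
  - exact: gen_subalgebra_is_subalgebra.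
  - exact: BA (QB _ Qg).
  - by have : [set: X] z by []; rewrite -KXQ; exact.
  - exact: mul_indic_ge0.
  - exact: mul_indic_sub1_ge0.
split => //; apply/seteqP; split; first exact: closure_mX_sub_KY.
move=> y [Yy y_ge0]; split => //.
have QQ' : Q `<=` Q' by move=> g Qg; apply: sub_gen_qmodule; left.
have [x yx] := KY_restrict_point BA y cX cB clB QQ' (conj Yy y_ge0).
have := y_ge0 _ Aqf (sub_gen_qmodule _ _ _ (or_intror (or_introl erefl))).
rewrite (Y_eval_mulf sB Af Bq Aqf Yy yx) => qc_ge0.
have := y_ge0 _ Aqf1 (sub_gen_qmodule _ _ _ (or_intror (or_intror erefl))).
rewrite (Y_eval_mulfB1 sB Af Bq Aqf1 Yy yx) => qc1_ge0.
apply: (Y_in_closure_range_m Af sB cB (indic_idem _) Yy yx).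
exact: closure_indic_ge0_level hq (Y_idempotent Af Yy (indic_idem _)) qc_ge0 qc1_ge0.
Qed.
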